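(* Let $M,S,a$ be integers with $M+S\ge0$. Then the sum on the left below has only finitely many nonzero terms, and $$\sum_{k\in\mathbb{Z}}q^{k^2+ak}\left[{M\atop a+k}\right]_q^+\left[{S\atop k}\right]_q^+=\left[{M+S\atop S+a}\right]_q .$$
   Context: Let $(q)_n=\prod_{i=1}^n(1-q^i)$. Define $\left[{n\atop m}\right]_q=\frac{(q)_n}{(q)_{n-m}(q)_m}$ if $n\ge m\ge0$ and $0$ otherwise. For all integers $n,m$ set $\left[{n\atop m}\right]_q^+=\left[{n\atop m}\right]_q$ if $n\ge0$, and $\left[{n\atop m}\right]_q^+=(-1)^{n-m}q^{-((n-m)^2+(n-m))/2}\left[{-m-1\atop -n-1}\right]_{q^{-1}}$ if $n<0$. *)

From HB Require Import structures.
From mathcomp Require Import all_boot all_order all_algebra.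
Set Implicit Arguments. Unset Strict Implicit. Unset Printing Implicit Defensive.
Import Order.TTheory GRing.Theory Num.Theory.
Local Open Scope ring_scope.

Definition qpoch (F : fieldType) (q : F) (n : nat) : F :=
  \prod_(1 <= i < n.+1) (1 - q ^+ i).

Definition qbin (F : fieldType) (q : F) (n m : int) : F :=
  if (0 <= m) && (m <= n) then
    qpoch q `|n|%N / (qpoch q `|n - m|%N * qpoch q `|m|%N)
  else 0.

Definition qbinp (F : fieldType) (q : F) (n m : int) : F :=
  if 0 <= n then qbin q n m
  else (-1) ^ (n - m) * q ^ (- (((n - m) ^+ 2 + (n - m)) %/ 2)%Z)
       * qbin q^-1 (- m - 1) (- n - 1).

Definition qvar : {fraction {poly int}} := tofrac 'X.

From mathcomp Require Import all_boot all_order all_algebra.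
From mathcomp Require Import zify ring.
Import Order.TTheory GRing.Theory Num.Theory.
Local Open Scope ring_scope.

(* Induction on S >= 0.  The q-Pascal rule [S+1, k] = q^(S+1-k) [S, k-1] + [S, k]
   splits the sum for (M, S+1, a) into q^(S+1+a) times the sum for (M, S, a+1)
   plus the sum for (M, S, a); by induction these are q^(S+1+a) [M+S, S+a+1] and
   [M+S, S+a], which the other q-Pascal rule reassembles into [M+S+1, S+1+a].  That
   rule holds for the extended binomial [n, m]^+ at every integer n, since for n <= 0
   it is Pascal's rule in q^-1 seen through the reflection formula.  When S < 0 we
   have M >= 0, and the shift k -> k + a exchanges (M, a) with (S, -a).
   Everything works over any field, for any q that is nonzero and not a root of
   unity. *)

Lemma sum_int_window {V : nmodType} (f : int -> V) (n K : nat) (L : int) :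
    (forall k, ~~ (0 <= k < n%:Z) -> f k = 0) -> L <= 0 -> n%:Z <= L + K%:Z ->
  \sum_(i < K) f (L + i%:Z) = \sum_(i < n) f i%:Z.
Proof.
move=> f_supp L_le0 nK; set d := `|L|%N.
have -> : K = (d + (n + (K - d - n)))%N by rewrite /d; lia.
rewrite !big_split_ord /= big1 ?add0r => [|i _]; last first.
  by apply: f_supp; have := ltn_ord i; rewrite /d; lia.
rewrite [X in _ + X]big1 ?addr0 => [|i _]; last first.
  by apply: f_supp; have := ltn_ord i; rewrite /d; lia.
by apply: eq_bigr => i _; congr f; rewrite /d; lia.
Qed.

Definition qgeneric {F : fieldType} (q : F) : Prop :=
  q != 0 /\ forall i : nat, (0 < i)%N -> q ^+ i != 1.

Lemma qgenericV {F : fieldType} {q : F} : qgeneric q -> qgeneric q^-1.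
Proof.
move=> [q0 qi]; split=> [|i /qi]; first by rewrite invr_eq0.
by apply: contra; rewrite exprVn invr_eq1.
Qed.

Section QBinomial.

Context {F : fieldType}.
Variable q : F.

Lemma qpoch0 : qpoch q 0 = 1.
Proof. by rewrite /qpoch big_geq. Qed.

Lemma qpochS n : qpoch q n.+1 = qpoch q n * (1 - q ^+ n.+1).
Proof. by rewrite /qpoch big_nat_recr. Qed.

Lemma qbin_nat (n m : nat) : (m <= n)%N ->
  qbin q n m = qpoch q n / (qpoch q (n - m) * qpoch q m).
Proof. by move=> le_mn; rewrite /qbin lez_nat le_mn subzn. Qed.

Lemma qbin_eq0 (n m : int) : ~~ (0 <= m <= n) -> qbin q n m = 0.
Proof. by move=> /negbTE out; rewrite /qbin out. Qed.

Lemma qbin_sym (n m : int) : qbin q n m = qbin q n (n - m).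
Proof.
rewrite /qbin; have -> : (0 <= n - m <= n) = (0 <= m <= n) by apply/idP/idP; lia.
case: ifP => // _; have -> : absz (n - (n - m))%R = absz m by congr absz; lia.
by rewrite [X in _ / X]mulrC.
Qed.

Hypothesis q_generic : qgeneric q.

Lemma qpoch_neq0 n : qpoch q n != 0.
Proof.
case: q_generic => _ qi; elim: n => [|n IHn]; first by rewrite qpoch0 oner_neq0.
by rewrite qpochS mulf_neq0 // subr_eq0 eq_sym qi.
Qed.

Lemma qbin0 (n : int) : qbin q n 0 = if 0 <= n then 1 else 0.
Proof.
rewrite /qbin lexx /=; case: ifP => // _.
by rewrite subr0 qpoch0 mulr1 divff ?qpoch_neq0.
Qed.

Lemma qbinn (n : nat) : qbin q n n = 1.
Proof. by rewrite qbin_nat // subnn qpoch0 mul1r divff ?qpoch_neq0. Qed.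

Lemma qbin_pascalS (j r : nat) :
  qbin q (j + r).+2 j.+1 = qbin q (j + r).+1 j + q ^+ j.+1 * qbin q (j + r).+1 j.+1.
Proof.
case: q_generic => _ qi.
have qS_neq1 i : 1 - q ^+ i.+1 != 0 by rewrite subr_eq0 eq_sym qi.
have := qS_neq1 (j + r); have := qS_neq1 r; have := qS_neq1 j.
have := qpoch_neq0 (j + r); have := qpoch_neq0 r; have := qpoch_neq0 j.
rewrite !qbin_nat; try lia.
rewrite !subSS !subSn ?leq_addr // !addKn !qpochS !exprS exprD => *.
by field; apply/and4P.
Qed.

Lemma qbin_pascal (n : nat) (m : int) :
  qbin q n.+1 m = qbin q n (m - 1) + q ^ m * qbin q n m.
Proof.
have [m_lt0 | m_ge0] := ltP m 0.
  by rewrite !qbin_eq0 ?mulr0 ?addr0 //; apply/negP; lia.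
have [[|j] -> {m m_ge0}] : exists k : nat, m = k by exists `|m|%N; lia.
  by rewrite !qbin0 expr0z mul1r qbin_eq0 ?add0r //; apply/negP; lia.
have -> : j.+1%:Z - 1 = j by lia.
have [lt_jn | le_nj] := ltnP j n.
  have [r ->] : exists r, n = (j + r).+1 by exists (n - j.+1)%N; lia.
  by rewrite qbin_pascalS -exprnP.
have [-> | lt_nj] := eqVneq j n.
  by rewrite !qbinn (qbin_eq0 _ n.+1) ?mulr0 ?addr0 //; apply/negP; lia.
by rewrite !qbin_eq0 ?mulr0 ?addr0 //; apply/negP; lia.
Qed.

Lemma qbin_pascal_rev (n : nat) (m : int) :
  qbin q n.+1 m = q ^ (n.+1%:Z - m) * qbin q n (m - 1) + qbin q n m.
Proof.
rewrite qbin_sym qbin_pascal addrC [qbin q n (m - 1)]qbin_sym [qbin q n m]qbin_sym.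
by congr (_ * qbin _ _ _ + qbin _ _ _); lia.
Qed.

End QBinomial.

Definition ztri (x : int) : int := ((x ^+ 2 + x) %/ 2)%Z.

Lemma ztriB1 (x : int) : ztri x = ztri (x - 1) + x.
Proof.
rewrite /ztri; have -> : x ^+ 2 + x = x * 2 + ((x - 1) ^+ 2 + (x - 1)) by ring.
by rewrite divzMDl // addrC.
Qed.

Section ExtendedQBinomial.

Context {F : fieldType}.
Variable q : F.

Lemma qbinp_pos (n m : int) : 0 <= n -> qbinp q n m = qbin q n m.
Proof. by move=> n_ge0; rewrite /qbinp n_ge0. Qed.

Lemma qbinp_neg (n m : int) : n < 0 ->
  qbinp q n m = (-1) ^ (n - m) * q ^ (- ztri (n - m)) * qbin q^-1 (- m - 1) (- n - 1).
Proof. by move=> n_lt0; rewrite /qbinp lt_geF. Qed.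

Hypothesis q_generic : qgeneric q.

Lemma qbinp_pascal_rhs_le0 (n m : int) : n <= 0 ->
  qbinp q (n - 1) (m - 1) + q ^ m * qbinp q (n - 1) m =
    (-1) ^ (n - m) * q ^ (- ztri (n - m)) *
    (qbin q^-1 (- m) (- n) - q^-1 ^ (- n) * qbin q^-1 (- m - 1) (- n)).
Proof.
move=> n_le0; have [q_neq0 _] := q_generic; set d := n - m.
have sign_pred : (-1 : F) ^ (d - 1) = - (-1) ^ d.
  by rewrite -{2}(subrK 1 d) [in RHS]expfzDr ?oppr_eq0 ?oner_eq0 // expr1z mulrN1 opprK.
have q_pred : q ^ m * q ^ (- ztri (d - 1)) = q ^ (- ztri d) * q^-1 ^ (- n).
  rewrite exprz_inv opprK -!expfzDr // [ztri d]ztriB1 /d; congr (_ ^ _); lia.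
rewrite !qbinp_neg; try lia.
have -> : n - 1 - (m - 1) = d by rewrite /d; lia.
have -> : n - 1 - m = d - 1 by rewrite /d; lia.
have -> : - (m - 1) - 1 = - m by lia.
have -> : - (n - 1) - 1 = - n by lia.
rewrite sign_pred; transitivity ((-1) ^ d * q ^ (- ztri d) * qbin q^-1 (- m) (- n) -
  (-1) ^ d * (q ^ m * q ^ (- ztri (d - 1))) * qbin q^-1 (- m - 1) (- n)); first ring.
by rewrite q_pred; ring.
Qed.

Lemma qbinp_pascal (n m : int) :
  qbinp q n m = qbinp q (n - 1) (m - 1) + q ^ m * qbinp q (n - 1) m.
Proof.
have [n_gt0 | n_le0] := ltP 0 n.
  have [k ->] : exists k : nat, n = k.+1 by exists `|n|.-1; lia.
  by rewrite (_ : k.+1%:Z - 1 = k); [rewrite !qbinp_pos // qbin_pascal | lia].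
have qV_generic := qgenericV q_generic.
rewrite qbinp_pascal_rhs_le0 //.
have [n_lt0 | n_ge0] := ltP n 0.
  rewrite qbinp_neg //; congr (_ * _).
  have [m_ge0 | m_lt0] := leP 0 m.
    by rewrite !qbin_eq0 ?mulr0 ?subr0 //; apply/negP; lia.
  have [k km] : exists k : nat, - m = k.+1 by exists `|m|.-1; lia.
  rewrite km (_ : k.+1%:Z - 1 = k); last lia.
  by rewrite qbin_pascal ?addrK.
have {n_le0 n_ge0} -> : n = 0 by lia.
rewrite qbinp_pos // oppr0 expr0z mul1r !qbin0 // sub0r.
have [m_gt0 | m_le0] := ltP 0 m.
  by rewrite qbin_eq0 ?ifF ?subrr ?mulr0 //; [lia | lia | apply/negP; lia].
have [-> | m_neq0] := eqVneq m 0; first by rewrite qbin0 // oppr0 !expr0z !mul1r subr0.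
by rewrite qbin_eq0 ?ifT ?subrr ?mulr0 //; [lia | lia | apply/negP; lia].
Qed.

End ExtendedQBinomial.

Section QVandermonde.

Context {F : fieldType}.
Variable q : F.

Definition vdm_term (M S a k : int) : F :=
  q ^ (k ^+ 2 + a * k) * qbinp q M (a + k) * qbinp q S k.

Lemma vdm_term_nat_eq0 (M : int) (s : nat) (a k : int) :
  ~~ (0 <= k <= s%:Z) -> vdm_term M s a k = 0.
Proof. by move=> k_out; rewrite /vdm_term (qbinp_pos q s) // qbin_eq0 ?mulr0. Qed.

Lemma vdm_term_swap (M S a k : int) : vdm_term M S a k = vdm_term S M (- a) (k + a).
Proof.
rewrite /vdm_term (_ : (k + a) ^+ 2 + - a * (k + a) = k ^+ 2 + a * k); last by ring.
by rewrite (_ : - a + (k + a) = k) 1?(addrC k a) 1?mulrAC //; ring.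
Qed.

Lemma vdm_term_eq0 (M S a k : int) : 0 <= M + S ->
  (`|M| + `|S| + `|a| < `|k|)%N -> vdm_term M S a k = 0.
Proof.
move=> MS_ge0 k_big; have [S_ge0 | S_lt0] := leP 0 S.
  have [s S_s] : exists s : nat, S = s by exists `|S|%N; lia.
  by rewrite S_s vdm_term_nat_eq0 //; lia.
have [m M_m] : exists m : nat, M = m by exists `|M|%N; lia.
by rewrite vdm_term_swap M_m vdm_term_nat_eq0 //; lia.
Qed.

Hypothesis q_generic : qgeneric q.

Lemma vdm_term_pascal (M : int) (s : nat) (a k : int) :
  vdm_term M s.+1 a k = q ^ (s.+1%:Z + a) * vdm_term M s (a + 1) (k - 1) + vdm_term M s a k.
Proof.
have [q_neq0 _] := q_generic.
rewrite /vdm_term (qbinp_pos q s.+1) // !(qbinp_pos q s) // qbin_pascal_rev //.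
rewrite (_ : a + 1 + (k - 1) = a + k); last by ring.
have E : q ^ (k ^+ 2 + a * k) * q ^ (s.+1%:Z - k) =
    q ^ (s.+1%:Z + a) * q ^ ((k - 1) ^+ 2 + (a + 1) * (k - 1)).
  by rewrite -!expfzDr //; congr (_ ^ _); ring.
transitivity (q ^ (k ^+ 2 + a * k) * q ^ (s.+1%:Z - k) * qbinp q M (a + k) * qbin q s (k - 1)
  + q ^ (k ^+ 2 + a * k) * qbinp q M (a + k) * qbin q s k); first ring.
by rewrite E; ring.
Qed.

Lemma vdm_sum_nat (s : nat) (M a : int) :
  \sum_(k < s.+1) vdm_term M s a k%:Z = qbinp q (M + s%:Z) (s%:Z + a).
Proof.
elim: s a => [|s IHs] a.
  rewrite big_ord1 /vdm_term !addr0 add0r mulr0 expr0z mul1r (qbinp_pos q 0) //.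
  by rewrite qbin0 // mulr1 -[0%:Z]/(0 : int) add0r.
under eq_bigr do rewrite vdm_term_pascal.
rewrite big_split -mulr_sumr /= big_ord_recl [X in _ + X]big_ord_recr /=.
rewrite [vdm_term _ _ _ (_ - 1)]vdm_term_nat_eq0 ?add0r; last by apply/negP; lia.
rewrite [vdm_term _ _ _ s.+1]vdm_term_nat_eq0 ?addr0; last by apply/negP; lia.
have bump0_pred (i : nat) : (bump 0 i)%:Z - 1 = i by rewrite /bump add1n; lia.
under eq_bigr do rewrite bump0_pred.
rewrite !IHs [RHS](qbinp_pascal _ q_generic) addrC.
have -> : M + s.+1%:Z - 1 = M + s%:Z by lia.
have -> : s.+1%:Z + a - 1 = s%:Z + a by lia.
by have -> : s%:Z + (a + 1) = s.+1%:Z + a by lia.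
Qed.

Lemma vdm_sum_window (s : nat) (M a L : int) (K : nat) : L <= 0 -> s%:Z < L + K%:Z ->
  \sum_(i < K) vdm_term M s a (L + i%:Z) = qbinp q (M + s%:Z) (s%:Z + a).
Proof.
move=> L_le0 sK; rewrite (sum_int_window _ s.+1) ?vdm_sum_nat // => k k_out.
by apply: vdm_term_nat_eq0; lia.
Qed.

End QVandermonde.

Lemma qgeneric_qvar : qgeneric qvar.
Proof.
split=> [|i i_gt0]; first by rewrite /qvar tofrac_eq0 polyX_eq0.
rewrite /qvar -tofracXn -(rmorph1 (@tofrac _)) tofrac_eq.
apply/eqP => /(congr1 (fun p : {poly int} => size p)).
by rewrite size_polyXn size_poly1 => -[i0]; rewrite i0 in i_gt0.
Qed.

Theorem mainTheorem6 (M S a : int) : 0 <= M + S ->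
  let term := fun k : int =>
    qvar ^ (k ^+ 2 + a * k) * qbinp qvar M (a + k) * qbinp qvar S k in
  exists N : nat,
    (forall k : int, (N < `|k|)%N -> term k = 0) /\
    \sum_(i < (N + N).+1) term (i%:Z - N%:Z) = qbinp qvar (M + S) (S + a).
Proof.
move=> MS_ge0; rewrite -/(vdm_term qvar M S a) /=.
set N := (`|M| + `|S| + `|a|)%N; exists N; split.
  by move=> k; exact: vdm_term_eq0.
have [S_ge0 | S_lt0] := leP 0 S.
  have [s S_s] : exists s : nat, S = s by exists `|S|%N; lia.
  under eq_bigr do rewrite addrC.
  by rewrite S_s; apply: vdm_sum_window; [exact: qgeneric_qvar | rewrite /N; lia..].
have [m M_m] : exists m : nat, M = m by exists `|M|%N; lia.
rewrite M_m; under eq_bigr do rewrite vdm_term_swap -addrA addrC.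
rewrite vdm_sum_window; [|exact: qgeneric_qvar | rewrite /N; lia..].
rewrite addrC !qbinp_pos 1?qbin_sym; [congr qbin | ..]; lia.
Qed.
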